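(* Let $k$ be a positive integer and define $g_k(n)$ by $$\sum_{n=0}^{\infty} g_k(n)q^n=\frac{(-q;q)_\infty}{(q;q)_\infty}\,\phi(q^k),\qquad \phi(q)=\sum_{m=-\infty}^{\infty}q^{m^2}.$$ Then $g_k(n)$ equals the number of overpartitions of $n$ into parts such that no part is congruent to $0$ modulo $2k$ and parts congruent to $k \pmod{2k}$ have two colours.
   Context: For $|q|<1$, $(A;q)_\infty=\prod_{j\ge0}(1-Aq^j)$ and $(A_1,\dots,A_r;q)_\infty=\prod_i(A_i;q)_\infty$. An overpartition of $n$ is a partition of $n$ in which the first occurrence of each part may be overlined; its generating function is $(-q;q)_\infty/(q;q)_\infty$. ''Parts congruent to $k\pmod{2k}$ have two colours'' means each such part may appear in two distinguishable copies (colours), each copy being subject to the overpartition rule. *)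

From mathcomp Require Import all_boot all_algebra.
Set Implicit Arguments. Unset Strict Implicit. Unset Printing Implicit Defensive.
Import GRing.Theory.
Local Open Scope ring_scope.

(* Factors with j > n, geometric terms with i > n and theta terms with |m| > n
   only contribute to powers > n (for k >= 1), so coefficient n is exact. *)
Definition gen_trunc (k N : nat) : {poly int} :=
  (\prod_(1 <= j < N.+1) ((1 + 'X^j) * \sum_(i < N.+1) 'X^(j * i)))
  * \sum_(m < (2 * N).+1) 'X^(k * (absz (m%:Z - N%:Z)) ^ 2).

Definition g (k n : nat) : int := (gen_trunc k n)`_n.

(* ---------- Combinatorial side ----------
   A coloured part is a pair (s, c) with s the part size and c the colour
   (false = first colour, true = second colour). *)
Definition allowed_part (k s : nat) (c : bool) : bool :=
  [&& 0 < s, s %% (2 * k) != 0 & c ==> (s %% (2 * k) == k)]%N.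

(* An overpartition of n (with the colouring rule) is encoded by assigning to each
   coloured part (s, c) with s <= n its multiplicity m (< n+1) and a flag telling
   whether its first occurrence is overlined (possible only when m >= 1). *)
Definition col_overpartition (k n : nat)
    (f : {ffun 'I_n.+1 * bool -> 'I_n.+1 * bool}) : bool :=
  [forall x : 'I_n.+1 * bool, ((f x).1 == 0 :> nat) || allowed_part k x.1 x.2]
  && [forall x : 'I_n.+1 * bool, (f x).2 ==> (0 < (f x).1)%N]
  && ((\sum_(x : 'I_n.+1 * bool) (x.1 : nat) * (f x).1)%N == n).

Arguments col_overpartition : clear implicits.

Definition num_col_overpartitions (k n : nat) : nat :=
  #|[set f : {ffun 'I_n.+1 * bool -> 'I_n.+1 * bool} | col_overpartition k n f]|.

From mathcomp Require Import all_boot all_algebra.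
From mathcomp Require Import ring zify.
Set Implicit Arguments. Unset Strict Implicit. Unset Printing Implicit Defensive.
Import GRing.Theory.
Local Open Scope ring_scope.

(* All power series are truncated to polynomials and compared below degree n + 1
   ([eqmodX]).  With E_s = (1 + q^s) / (1 - q^s), the generating function of the
   copies of a part s in an overpartition, the left side is
   prod_(s >= 1) E_s * phi(q^k) and the right side is prod_s E_s ^ c(s), where c(s)
   is the number of colours of s.  Parts not divisible by k have one colour on both
   sides, so after substituting x = q^k the theorem reduces to its case k = 1:
   prod_(i >= 1) E_i * phi(x) = prod_(i odd) E_i ^ 2.  Multiplied by
   (x; x)_oo (x; x^2)_oo, this follows from Euler's identity (-x; x)_oo (x; x^2)_oo = 1
   and the Jacobi triple product phi(x) = (-x; x^2)_oo^2 (x^2; x^2)_oo.  The latter is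
   obtained from its finite form sum_i x^((i - N)^2) [2N, i]_(x^2) = (-x; x^2)_N^2,
   because [2N, i]_(x^2) (x^2; x^2)_oo = 1 up to a degree that grows with
   min(i, 2N - i). *)

Section EqualityModuloXn.
Context {R : nzRingType}.
Implicit Types (p q : {poly R}) (m e : nat).

Definition eqmodX m p q := take_poly m p = take_poly m q.

Lemma eqmodXP m p q : eqmodX m p q <-> forall i, (i < m)%N -> p`_i = q`_i.
Proof.
split=> [pq i lt_im | pq]; last first.
  by apply/polyP => i; rewrite !coef_take_poly; case: ifP => // /pq.
by have := congr1 (coefp i) pq; rewrite /= !coef_take_poly lt_im.
Qed.

Lemma eqmodX_sym m p q : eqmodX m p q -> eqmodX m q p.
Proof. exact: esym. Qed.

Lemma eqmodX_trans m q p r : eqmodX m p q -> eqmodX m q r -> eqmodX m p r.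
Proof. exact: etrans. Qed.

Lemma eqmodX_leq m m' p q : (m' <= m)%N -> eqmodX m p q -> eqmodX m' p q.
Proof.
by move=> le_m'm /eqmodXP pq; apply/eqmodXP => i lt_im'; apply/pq/(leq_trans lt_im').
Qed.

Lemma eqmodXD m p q p' q' :
  eqmodX m p p' -> eqmodX m q q' -> eqmodX m (p + q) (p' + q').
Proof. by rewrite /eqmodX !take_polyD => -> ->. Qed.

Lemma eqmodXN m p p' : eqmodX m p p' -> eqmodX m (- p) (- p').
Proof. by move/eqmodXP=> pp'; apply/eqmodXP => i lt_im; rewrite !coefN pp'. Qed.

Lemma eqmodXB m p q p' q' :
  eqmodX m p p' -> eqmodX m q q' -> eqmodX m (p - q) (p' - q').
Proof. by move=> pp' /eqmodXN; apply: eqmodXD. Qed.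

Lemma eqmodXM m p q p' q' :
  eqmodX m p p' -> eqmodX m q q' -> eqmodX m (p * q) (p' * q').
Proof.
move=> /eqmodXP pp' /eqmodXP qq'; apply/eqmodXP => i lt_im.
rewrite !coefM; apply: eq_bigr => j _.
have le_ji : (j <= i)%N by rewrite -ltnS.
by rewrite pp' ?qq' // (leq_ltn_trans _ lt_im) ?leq_subr ?le_ji.
Qed.

Lemma eqmodX_prod m I (r : seq I) (P : pred I) (F G : I -> {poly R}) :
  (forall i, P i -> eqmodX m (F i) (G i)) ->
  eqmodX m (\prod_(i <- r | P i) F i) (\prod_(i <- r | P i) G i).
Proof. by move=> FG; apply: (big_ind2 (eqmodX m)) => // *; apply: eqmodXM. Qed.

Lemma eqmodX_sum m I (r : seq I) (P : pred I) (F G : I -> {poly R}) :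
  (forall i, P i -> eqmodX m (F i) (G i)) ->
  eqmodX m (\sum_(i <- r | P i) F i) (\sum_(i <- r | P i) G i).
Proof. by move=> FG; apply: (big_ind2 (eqmodX m)) => // *; apply: eqmodXD. Qed.

Lemma eqmodXX m p q e : eqmodX m p q -> eqmodX m (p ^+ e) (q ^+ e).
Proof. by move=> pq; elim: e => [|e IHe]; rewrite ?expr0 // !exprS; apply: eqmodXM. Qed.

Lemma eqmodX_mulXn m e p q :
  eqmodX m p q -> eqmodX (e + m) ('X^e * p) ('X^e * q).
Proof.
move/eqmodXP=> pq; apply/eqmodXP => i lt_iem; rewrite !coefXnM; case: ltnP => // le_ei.
by apply: pq; rewrite ltn_subLR // addnC.
Qed.

Lemma eqmodX_mulXn0 m e p : (m <= e)%N -> eqmodX m ('X^e * p) 0.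
Proof.
by move=> le_me; apply/eqmodXP => i lt_im; rewrite coefXnM coef0 (leq_trans lt_im le_me).
Qed.

Lemma eqmodX_Xn0 m e : (m <= e)%N -> eqmodX m 'X^e 0.
Proof. by rewrite -['X^e]mulr1; apply: eqmodX_mulXn0. Qed.

Lemma eqmodX_1DXn m e : (m <= e)%N -> eqmodX m (1 + 'X^e) 1.
Proof.
by move=> le_me; rewrite -[X in eqmodX _ _ X]addr0; apply: eqmodXD => //; apply: eqmodX_Xn0.
Qed.

Lemma eqmodX_1BXn m e : (m <= e)%N -> eqmodX m (1 - 'X^e) 1.
Proof.
by move=> le_me; rewrite -[X in eqmodX _ _ X]subr0; apply: eqmodXB => //; apply: eqmodX_Xn0.
Qed.

(* Since [u`_0 = 1], the i-th coefficient of [p * u] is [p`_i] plus a combination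
   of lower coefficients of [p]. *)
Lemma eqmodX_mulIr m (u p q : {poly R}) :
  u`_0 = 1 -> eqmodX m (p * u) (q * u) -> eqmodX m p q.
Proof.
move=> u0 /eqmodXP pquq; apply/eqmodXP.
elim: m pquq => [|m IHm] pquq i //; rewrite ltnS leq_eqVlt => /orP[/eqP->|]; last first.
  by apply: IHm => j lt_jm; apply/pquq/ltnW.
have pq j : (j < m)%N -> p`_j = q`_j by apply: IHm => l lt_lm; apply/pquq/ltnW.
have := pquq m (ltnSn m); rewrite !coefM !big_ord_recr /= subnn u0 !mulr1.
by under eq_bigr => j _ do rewrite pq //; move/addrI.
Qed.

Lemma eqmodX_prod_nat m a b (P : pred nat) (F G : nat -> {poly R}) :
  (forall i, (a <= i < b)%N -> P i -> eqmodX m (F i) (G i)) ->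
  eqmodX m (\prod_(a <= i < b | P i) F i) (\prod_(a <= i < b | P i) G i).
Proof.
move=> FG; rewrite big_nat_cond [X in eqmodX _ _ X]big_nat_cond.
by apply: eqmodX_prod => i /andP[]; apply: FG.
Qed.

Lemma eqmodX_prod_widen m a b c (P : pred nat) (F : nat -> {poly R}) :
  (a <= b <= c)%N -> (forall i, (b <= i < c)%N -> P i -> eqmodX m (F i) 1) ->
  eqmodX m (\prod_(a <= i < b | P i) F i) (\prod_(a <= i < c | P i) F i).
Proof.
case/andP=> le_ab le_bc F1; rewrite (big_cat_nat le_ab le_bc) /=.
rewrite -[X in eqmodX _ X _]mulr1; apply: eqmodXM => //; apply: eqmodX_sym.
rewrite big_nat_cond; apply: (big_ind (fun x => eqmodX m x 1)) => // [x y x1 y1|i /andP[]].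
  by rewrite -(mulr1 1); apply: eqmodXM.
exact: F1.
Qed.

Lemma eqmodX_comp_Xn m k p q : (0 < k)%N ->
  eqmodX m p q -> eqmodX (k * m) (p \Po 'X^k) (q \Po 'X^k).
Proof.
move=> k_gt0 /eqmodXP pq; apply/eqmodXP => i lt_ikm; rewrite !coef_comp_poly_Xn //.
have [[j def_i]|//] := dvdnP; rewrite def_i mulnK // pq //.
by rewrite -(ltn_pmul2r k_gt0) -def_i mulnC.
Qed.

End EqualityModuloXn.

Section GaussianBinomials.
Context {R : comNzRingType}.
Variable t : R.

Fixpoint qbinom (n k : nat) : R :=
  match n, k with
  | _, 0 => 1
  | 0, _.+1 => 0
  | n'.+1, k'.+1 => qbinom n' k' + t ^+ k * qbinom n' k
  end.

Lemma qbinom0 n : qbinom n 0 = 1. Proof. by case: n. Qed.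

Lemma qbinomS n k : qbinom n.+1 k.+1 = qbinom n k + t ^+ k.+1 * qbinom n k.+1.
Proof. by []. Qed.

Lemma qbinom_small n k : (n < k)%N -> qbinom n k = 0.
Proof.
elim: n k => [|n IHn] [|k] //= lt_nk.
by rewrite !IHn ?mulr0 ?addr0 // ltnW.
Qed.

Lemma qbinomn n : qbinom n n = 1.
Proof. by elim: n => //= n ->; rewrite qbinom_small // mulr0 addr0. Qed.

Lemma qbinom1 n : qbinom n.+1 1 = \sum_(i < n.+1) t ^+ i.
Proof.
elim: n => [|n IHn]; first by rewrite big_ord1 /= mulr0 addr0.
rewrite qbinomS qbinom0 IHn [RHS]big_ord_recl mulr_sumr.
by congr (_ + _); apply: eq_bigr => i _; rewrite -exprS.
Qed.

Lemma qbinomSr n k : qbinom n.+1 k.+1 = t ^+ (n - k) * qbinom n k + qbinom n k.+1.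
Proof.
elim: n k => [|n IHn] [|k].
- by rewrite /= !mulr0 !addr0 mulr1.
- by rewrite /= !mulr0 !addr0.
- by rewrite qbinom1 qbinom0 qbinom1 subn0 mulr1 big_ord_recr addrC.
rewrite qbinomS [in LHS]IHn [in LHS]IHn !qbinomS subSS.
have [lt_nk|le_kn] := ltnP n k.+1.
  rewrite (qbinom_small lt_nk) (@qbinom_small n k.+2); last exact: ltnW.
  by rewrite !(mulr0, addr0).
have e : t ^+ k.+2 * t ^+ (n - k.+1) = t ^+ (n - k) * t ^+ k.+1.
  by rewrite -!exprD; congr (_ ^+ _); lia.
rewrite !mulrDr !mulrA e; ring.
Qed.

Lemma qbinomSS n i :
  qbinom n.+2 i.+2 =
  t ^+ i.+2 * qbinom n i.+2 + (1 + t ^+ n.+1) * qbinom n i.+1 + t ^+ (n - i) * qbinom n i.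
Proof.
rewrite qbinomS !qbinomSr.
have [lt_ni|le_in] := ltnP n i.+1.
  rewrite (qbinom_small lt_ni) (@qbinom_small n i.+2); last exact: ltnW.
  by rewrite !(mulr0, addr0); ring.
have e : t ^+ i.+2 * t ^+ (n - i.+1) = t ^+ n.+1.
  by rewrite -exprD; congr (_ ^+ _); lia.
rewrite mulrDr mulrA e; ring.
Qed.

Definition qpoch (m : nat) : R := \prod_(i < m) (1 - t ^+ i.+1).

Lemma qpochS m : qpoch m.+1 = qpoch m * (1 - t ^+ m.+1).
Proof. by rewrite /qpoch big_ord_recr. Qed.

Lemma qbinom_fact a b : qbinom (a + b) a * qpoch a * qpoch b = qpoch (a + b).
Proof.
elim: a b => [|a IHa] b; first by rewrite add0n qbinom0 /qpoch big_ord0 !mul1r.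
elim: b => [|b IHb]; first by rewrite addn0 qbinomn /qpoch big_ord0 mulr1 mul1r.
rewrite addSnnS in IHb; rewrite addSn; set c := (a + b.+1)%N in IHb *.
have -> : qbinom c.+1 a.+1 * qpoch a.+1 * qpoch b.+1 =
    (1 - t ^+ a.+1) * (qbinom c a * qpoch a * qpoch b.+1)
    + t ^+ a.+1 * (1 - t ^+ b.+1) * (qbinom c a.+1 * qpoch a.+1 * qpoch b).
  by rewrite qbinomS [qpoch a.+1]qpochS [qpoch b.+1]qpochS; ring.
have e : t ^+ c.+1 = t ^+ a.+1 * t ^+ b.+1 by rewrite -exprD /c addSn addnS.
by rewrite IHa IHb qpochS e; ring.
Qed.

End GaussianBinomials.

Section FiniteJacobiTripleProduct.
Context {R : comNzRingType}.
Variable y : R.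

Definition jacobi_term (N i : nat) : R :=
  y ^+ (`|i - N| ^ 2)%N * qbinom (y ^+ 2) (2 * N) i.

Lemma jacobi_term_small N i : (2 * N < i)%N -> jacobi_term N i = 0.
Proof. by move=> lt_2Ni; rewrite /jacobi_term qbinom_small ?mulr0. Qed.

Lemma jacobi_termS0 N : jacobi_term N.+1 0 = y ^+ (2 * N + 1) * jacobi_term N 0.
Proof. by rewrite /jacobi_term !qbinom0 !mulr1 -exprD; congr (_ ^+ _); lia. Qed.

Lemma jacobi_termS1 N :
  jacobi_term N.+1 1 =
  y ^+ (2 * N + 1) * jacobi_term N 1 + (1 + y ^+ (4 * N + 2)) * jacobi_term N 0.
Proof.
rewrite /jacobi_term; have -> : (2 * N.+1 = (2 * N).+2)%N by lia.
rewrite qbinom0 mulr1 qbinomSr qbinom0 subn0 mulr1 qbinomS qbinom0 -exprM mulrA.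
have -> : (`|1 - N.+1| = `|0 - N|)%N by lia.
have -> : y ^+ (2 * N + 1) * y ^+ (`|1 - N| ^ 2)%N = y ^+ (`|0 - N| ^ 2)%N * y ^+ 2.
  by rewrite -!exprD; congr (_ ^+ _); nia.
have -> : (2 * (2 * N).+1 = 4 * N + 2)%N by lia.
ring.
Qed.

Lemma jacobi_termSS N i :
  jacobi_term N.+1 i.+2 = y ^+ (2 * N + 1) * jacobi_term N i.+2
    + (1 + y ^+ (4 * N + 2)) * jacobi_term N i.+1 + y ^+ (2 * N + 1) * jacobi_term N i.
Proof.
rewrite /jacobi_term; have -> : (2 * N.+1 = (2 * N).+2)%N by lia.
rewrite qbinomSS -!exprM; have -> : (`|i.+2 - N.+1| = `|i.+1 - N|)%N by lia.
have -> : (2 * (2 * N).+1 = 4 * N + 2)%N by lia.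
have e2 : y ^+ (2 * N + 1) * y ^+ (`|i.+2 - N| ^ 2)%N =
    y ^+ (`|i.+1 - N| ^ 2)%N * y ^+ (2 * i.+2).
  by rewrite -!exprD; congr (_ ^+ _); nia.
rewrite !mulrA e2 !mulrDr !mulrA.
have [le_i2N|lt_2Ni] := leqP i (2 * N); last by rewrite (qbinom_small _ lt_2Ni) !mulr0; ring.
have e0 : y ^+ (2 * N + 1) * y ^+ (`|i - N| ^ 2)%N =
    y ^+ (`|i.+1 - N| ^ 2)%N * y ^+ (2 * (2 * N - i)).
  by rewrite -!exprD; congr (_ ^+ _); nia.
rewrite e0; ring.
Qed.

Lemma jacobi_triple_finite N :
  \sum_(0 <= i < (2 * N).+1) jacobi_term N i = \prod_(i < N) (1 + y ^+ (2 * i + 1)) ^+ 2.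
Proof.
elim: N => [|N IHN]; first by rewrite big_nat1 big_ord0 /jacobi_term /= mulr1.
set S := \sum_(0 <= i < _) jacobi_term N i in IHN.
have S1 : \sum_(0 <= i < (2 * N).+1) jacobi_term N i.+1 = S - jacobi_term N 0.
  rewrite big_nat_recr //= [jacobi_term N _]jacobi_term_small // addr0.
  by rewrite /S big_nat_recl // addrAC subrr add0r.
have S2 : \sum_(0 <= i < (2 * N).+1) jacobi_term N i.+2 = S - jacobi_term N 0 - jacobi_term N 1.
  rewrite big_nat_recr //= [jacobi_term N _]jacobi_term_small // addr0.
  by rewrite -S1 big_nat_recl // addrAC subrr add0r.
have -> : ((2 * N.+1).+1 = (2 * N).+1.+2)%N by lia.
rewrite big_ord_recr /= -IHN big_nat_recl // big_nat_recl //.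
under eq_bigr => i _ do rewrite jacobi_termSS.
rewrite !big_split /= -!mulr_sumr S1 S2 jacobi_termS0 jacobi_termS1 -/S.
have -> : y ^+ (4 * N + 2) = y ^+ (2 * N + 1) ^+ 2 by rewrite -exprM; congr (_ ^+ _); lia.
ring.
Qed.

End FiniteJacobiTripleProduct.

Section TruncatedJacobi.
Context {R : comNzRingType}.

Lemma qpochXn_coef0 d M : (0 < d)%N -> (qpoch ('X^d : {poly R}) M)`_0 = 1.
Proof.
move=> d_gt0; rewrite -horner_coef0 horner_prod; apply: big1 => i _.
by rewrite -exprM hornerD hornerN hornerC hornerXn expr0n muln_eq0 gtn_eqF // subr0.
Qed.

Lemma qpochXn_modX d L M : (L <= M)%N ->
  eqmodX (d * L.+1) (qpoch ('X^d : {poly R}) M) (qpoch 'X^d L).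
Proof.
move=> le_LM; rewrite /qpoch -(subnKC le_LM) big_split_ord /=.
rewrite -[X in eqmodX _ _ X]mulr1; apply: eqmodXM => //.
apply: (big_ind (fun p => eqmodX _ p 1)) => // [p q p1 q1|i _].
  by rewrite -(mulr1 1); apply: eqmodXM.
by rewrite -exprM; apply: eqmodX_1BXn; rewrite leq_mul2l ltnS leq_addr orbT.
Qed.

Lemma qbinomXn_modX d n i M : (0 < d)%N -> (i <= n)%N -> (minn i (n - i) <= M)%N ->
  eqmodX (d * (minn i (n - i)).+1) (qbinom ('X^d : {poly R}) n i * qpoch 'X^d M) 1.
Proof.
set L := minn i (n - i) => d_gt0 le_in le_LM.
have PiL : eqmodX (d * L.+1) (qpoch ('X^d : {poly R}) i) (qpoch 'X^d L).
  by apply: qpochXn_modX; rewrite geq_minl.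
have PniL : eqmodX (d * L.+1) (qpoch ('X^d : {poly R}) (n - i)) (qpoch 'X^d L).
  by apply: qpochXn_modX; rewrite geq_minr.
have PnL : eqmodX (d * L.+1) (qpoch ('X^d : {poly R}) n) (qpoch 'X^d L).
  by apply: qpochXn_modX; rewrite (leq_trans (geq_minl _ _)).
apply: eqmodX_trans (_ : eqmodX _ _ (qbinom 'X^d n i * qpoch 'X^d L)) _.
  by apply: eqmodXM => //; apply: qpochXn_modX.
apply: (eqmodX_mulIr (qpochXn_coef0 L d_gt0)); rewrite mul1r.
apply: eqmodX_trans PnL; have := qbinom_fact ('X^d : {poly R}) i (n - i).
rewrite (subnKC le_in) => <-.
by apply: eqmodXM; [apply: eqmodXM|]; apply: eqmodX_sym.
Qed.

Definition theta_trunc (N : nat) : {poly R} := \sum_(m < (2 * N).+1) 'X^(`|m - N| ^ 2)%N.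

Lemma jacobi_term_modX N M i : (i <= 2 * N)%N -> (N <= M)%N ->
  eqmodX N.+1 (jacobi_term 'X N i * qpoch ('X^2 : {poly R}) M) 'X^(`|i - N| ^ 2)%N.
Proof.
move=> le_i2N le_NM; rewrite /jacobi_term -mulrA -[X in eqmodX _ _ X]mulr1.
have le_min : (minn i (2 * N - i) <= M)%N by lia.
apply: eqmodX_leq (eqmodX_mulXn (`|i - N| ^ 2)%N (qbinomXn_modX (ltn0Sn 1) le_i2N le_min)).
(* with d = `|i - N|, the bound is d ^ 2 + 2 (N - d + 1) = (d - 1) ^ 2 + N + 1 *)
nia.
Qed.

Lemma jacobi_triple_modX N M : (N <= M)%N ->
  eqmodX N.+1 ((\prod_(i < N) (1 + 'X^(2 * i + 1)) ^+ 2) * qpoch ('X^2 : {poly R}) M)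
    (theta_trunc N).
Proof.
move=> le_NM; rewrite -(jacobi_triple_finite 'X) mulr_suml big_mkord.
by apply: eqmodX_sum => i _; apply: jacobi_term_modX; rewrite // -ltnS.
Qed.

End TruncatedJacobi.

Section EvenOddProducts.
Context {R : comNzRingType}.
Implicit Types (F : nat -> R).

Lemma prod_nat_even F m :
  \prod_(1 <= i < (2 * m).+1 | ~~ odd i) F i = \prod_(1 <= j < m.+1) F (2 * j)%N.
Proof.
elim: m => [|m IHm]; first by rewrite !big_geq.
have -> : ((2 * m.+1).+1 = (2 * m).+3)%N by lia.
rewrite big_mkcond [in LHS]big_nat_recr // [in LHS]big_nat_recr //= -big_mkcond IHm.
by rewrite [in RHS]big_nat_recr //= !negbK oddM /= mulr1 mulnS.
Qed.

Lemma prod_nat_odd F m :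
  \prod_(1 <= i < (2 * m).+1 | odd i) F i = \prod_(j < m) F (2 * j + 1)%N.
Proof.
elim: m => [|m IHm]; first by rewrite big_geq // big_ord0.
have -> : ((2 * m.+1).+1 = (2 * m).+3)%N by lia.
rewrite big_mkcond [in LHS]big_nat_recr // [in LHS]big_nat_recr //= -big_mkcond IHm.
by rewrite big_ord_recr /= oddM /= mulr1 addn1.
Qed.

End EvenOddProducts.

Section Euler.
Context {R : comNzRingType}.

Lemma coef0_prod_1BXn (P : pred nat) a b :
  (\prod_(a.+1 <= i < b | P i) (1 - 'X^i : {poly R}))`_0 = 1.
Proof.
rewrite coef0_prod big_nat_cond; apply: big1 => i /andP[/andP[lt_ai _] _].
by rewrite coefB coef1 coefXn (ltn_eqF (leq_ltn_trans (leq0n a) lt_ai)) subr0.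
Qed.

(* After multiplication by (X; X)_(m - 1), the factors (1 + X^i) (1 - X^i) = 1 - X^(2 i)
   form the even-index half of (X; X)_(m - 1), up to degree m. *)
Lemma euler_modX m :
  eqmodX m ((\prod_(1 <= i < m) (1 + 'X^i)) * \prod_(1 <= i < m | odd i) (1 - 'X^i))
    (1 : {poly R}).
Proof.
case: m => [|m]; first by apply/eqmodXP.
apply: (eqmodX_mulIr (coef0_prod_1BXn xpredT 0 m.+1)); rewrite mul1r.
rewrite mulrAC -big_split [X in eqmodX _ _ X](bigID odd) /= [X in eqmodX _ X _]mulrC.
apply: eqmodXM => //.
under eq_bigr do rewrite mulrC -subr_sqr expr1n -exprM mulnC.
apply: eqmodX_trans (_ : eqmodX _ _ (\prod_(1 <= j < m.+2) (1 - 'X^(2 * j)))) _.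
  apply: eqmodX_prod_widen => [|i /andP[le_mi _] _]; first by rewrite leqnSn.
  by apply: eqmodX_1BXn; lia.
rewrite -(prod_nat_even (fun i => 1 - 'X^i)); apply: eqmodX_sym.
apply: eqmodX_prod_widen => [|i /andP[le_mi _] _]; last exact: eqmodX_1BXn.
by apply/andP; split; lia.
Qed.

End Euler.

Section OverpartitionFactor.
Context {R : comNzRingType}.
Variable n : nat.

Definition geom_trunc (s : nat) : {poly R} := \sum_(i < n.+1) 'X^(s * i).

(* 1 + 2 (X^s + ... + X^(n s)), the truncation of (1 + X^s) / (1 - X^s). *)
Definition over_trunc (s : nat) : {poly R} := geom_trunc s *+ 2 - 1.

Lemma geom_truncE s : (1 - 'X^s) * geom_trunc s = 1 - 'X^(s * n.+1).
Proof.
rewrite /geom_trunc (eq_bigr (fun i : 'I_n.+1 => 'X^s ^+ i)) => [|i _]; last by rewrite exprM.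
by rewrite -opprB mulNr -subrX1 opprB exprM.
Qed.

Lemma mul1DXn_geom_trunc s : (1 + 'X^s) * geom_trunc s = over_trunc s + 'X^(s * n.+1).
Proof.
have -> : (1 + 'X^s) * geom_trunc s = geom_trunc s *+ 2 - (1 - 'X^s) * geom_trunc s.
  by rewrite mulr2n; ring.
by rewrite geom_truncE /over_trunc; ring.
Qed.

Lemma over_trunc_mul1BXn s : (0 < s)%N ->
  eqmodX n.+1 (over_trunc s * (1 - 'X^s)) (1 + 'X^s).
Proof.
move=> s_gt0; have -> : over_trunc s * (1 - 'X^s) = 1 + 'X^s - 'X^(s * n.+1) *+ 2.
  by rewrite /over_trunc mulrC mulrBr mulrnAr geom_truncE mulr2n; ring.
rewrite -[X in eqmodX _ _ X]subr0; apply: eqmodXB => //.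
rewrite mulr2n -[X in eqmodX _ _ X](addr0 0).
by apply: eqmodXD; apply: eqmodX_Xn0; rewrite leq_pmull.
Qed.

Lemma over_trunc_large s : (n < s)%N -> eqmodX n.+1 (over_trunc s) 1.
Proof.
move=> lt_ns; have G1 : eqmodX n.+1 (geom_trunc s) 1.
  rewrite /geom_trunc big_ord_recl muln0 -[X in eqmodX _ _ X]addr0; apply: eqmodXD => //.
  rewrite (eq_bigr (fun i : 'I_n => 'X^s * 'X^(s * i))) => [|i _]; last by rewrite -exprD mulnS.
  by rewrite -mulr_sumr; apply: eqmodX_mulXn0.
rewrite /over_trunc -[X in eqmodX _ _ X](addrK 1 1) mulr2n.
by apply: eqmodXB => //; apply: eqmodXD.
Qed.

Lemma over_trunc_comp_Xn s k : over_trunc s \Po 'X^k = over_trunc (s * k).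
Proof.
rewrite /over_trunc /geom_trunc rmorphB rmorphMn rmorph1 rmorph_sum /=.
by congr (_ *+ 2 - 1); apply: eq_bigr => i _; rewrite comp_Xn_poly -exprM mulnAC mulnC.
Qed.

End OverpartitionFactor.

Section ThetaIdentity.
Context {R : comNzRingType}.
Implicit Type F : nat -> {poly R}.

Lemma prod_expr_pos F m :
  \prod_(0 <= i < m) F i ^+ (0 < i)%N = \prod_(1 <= i < m) F i.
Proof.
case: m => [|m]; first by rewrite !big_geq.
by rewrite big_ltn // mul1r; apply: eq_big_nat => i /andP[/leq_trans->].
Qed.

Lemma prod_expr_odd F m :
  \prod_(0 <= i < m) F i ^+ (2 * odd i)%N = \prod_(1 <= i < m | odd i) F i ^+ 2.
Proof.
case: m => [|m]; first by rewrite !big_geq.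
rewrite big_ltn //= expr0 mul1r [RHS]big_mkcond; apply: eq_bigr => i _.
by case: (odd i); rewrite ?expr0.
Qed.

Lemma over_trunc_euler n :
  eqmodX n.+1 ((\prod_(1 <= i < n.+1) over_trunc n i) *
    ((\prod_(1 <= i < n.+1) (1 - 'X^i)) * \prod_(1 <= i < n.+1 | odd i) (1 - 'X^i)))
    (1 : {poly R}).
Proof.
rewrite mulrA -big_split /=; apply: eqmodX_trans (euler_modX n.+1); apply: eqmodXM => //.
by apply: eqmodX_prod_nat => i /andP[i_gt0 _] _; apply: over_trunc_mul1BXn.
Qed.

Lemma over_trunc_jacobi n :
  eqmodX n.+1 ((\prod_(1 <= i < n.+1 | odd i) over_trunc n i ^+ 2) *
    ((\prod_(1 <= i < n.+1) (1 - 'X^i)) * \prod_(1 <= i < n.+1 | odd i) (1 - 'X^i)))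
    (theta_trunc n : {poly R}).
Proof.
rewrite [X in _ * (X * _)](bigID odd) /=.
have -> : (\prod_(1 <= i < n.+1 | odd i) over_trunc n i ^+ 2) *
    ((\prod_(1 <= i < n.+1 | odd i) (1 - 'X^i)) *
      (\prod_(1 <= i < n.+1 | ~~ odd i) (1 - 'X^i)) *
      \prod_(1 <= i < n.+1 | odd i) (1 - 'X^i)) =
    (\prod_(1 <= i < n.+1 | odd i) (over_trunc n i * (1 - 'X^i)) ^+ 2) *
      \prod_(1 <= i < n.+1 | ~~ odd i) (1 - 'X^i) :> {poly R}.
  under [in RHS]eq_bigr do rewrite exprMn.
  by rewrite [in RHS]big_split /= !prodrXl; ring.
apply: (@eqmodX_trans _ _
  ((\prod_(1 <= i < (2 * n).+1 | odd i) (1 + 'X^i) ^+ 2) *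
    \prod_(1 <= i < (2 * n).+1 | ~~ odd i) (1 - 'X^i))).
  have le_n2n : (1 <= n.+1 <= (2 * n).+1)%N by apply/andP; split; lia.
  apply: eqmodXM; last by apply: eqmodX_prod_widen => // i /andP[le_ni _] _; apply: eqmodX_1BXn.
  apply: (@eqmodX_trans _ _ (\prod_(1 <= i < n.+1 | odd i) (1 + 'X^i) ^+ 2)).
    apply: eqmodX_prod_nat => i /andP[i_gt0 _] _.
    by apply: eqmodXX; apply: over_trunc_mul1BXn.
  apply: eqmodX_prod_widen => // i /andP[le_ni _] _.
  by rewrite -[X in eqmodX _ _ X](expr1n _ 2); apply/eqmodXX/eqmodX_1DXn.
rewrite (prod_nat_odd (fun i => (1 + 'X^i) ^+ 2)) (prod_nat_even (fun i => 1 - 'X^i)).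
have -> : \prod_(1 <= j < n.+1) (1 - 'X^(2 * j)) = qpoch ('X^2 : {poly R}) n.
  by rewrite /qpoch big_add1 big_mkord; apply: eq_bigr => j _; rewrite exprM.
exact: jacobi_triple_modX.
Qed.

Lemma theta_over_trunc n :
  eqmodX n.+1 ((\prod_(0 <= i < n.+1) over_trunc n i ^+ (0 < i)%N) * theta_trunc n)
    (\prod_(0 <= i < n.+1) over_trunc n i ^+ (2 * odd i)%N : {poly R}).
Proof.
rewrite prod_expr_pos prod_expr_odd.
have UB0 : ((\prod_(1 <= i < n.+1) (1 - 'X^i)) *
    \prod_(1 <= i < n.+1 | odd i) (1 - 'X^i) : {poly R})`_0 = 1.
  by rewrite coef0M !coef0_prod_1BXn mulr1.
apply: (eqmodX_mulIr UB0); apply: eqmodX_trans (eqmodX_sym (over_trunc_jacobi n)).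
rewrite mulrAC -[X in eqmodX _ _ X]mul1r; apply: eqmodXM => //.
exact: over_trunc_euler.
Qed.

End ThetaIdentity.

Lemma coef_prod_sum_Xn {R : nzRingType} (I J : finType) (P : I -> pred J)
    (d : I -> J -> nat) n :
  (\prod_(i : I) \sum_(j | P i j) 'X^(d i j) : {poly R})`_n =
  #|[set f in family P | (\sum_i d i (f i) == n)%N]|%:R.
Proof.
rewrite bigA_distr_big_dep coef_sum.
rewrite (eq_bigr (fun f : {ffun I -> J} => if (\sum_i d i (f i) == n)%N then 1 else 0)).
  by rewrite -big_mkcondr sumr_const cardsE.
by move=> f _; rewrite prodrXr coefXn eq_sym; case: (_ == n).
Qed.

Definition colours (k s : nat) : nat := (allowed_part k s false + allowed_part k s true)%N.

Lemma colours_ndvd k s : ~~ (k %| s)%N -> colours k s = 1%N.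
Proof.
move=> k_ndvd_s; have mod_k : (s %% (2 * k) %% k = s %% k)%N by rewrite modn_dvdm // dvdn_mull.
have s_gt0 : (0 < s)%N by rewrite lt0n; apply: contraNneq k_ndvd_s => ->.
have s2k_neq0 : (s %% (2 * k) != 0)%N.
  by apply: contraNneq k_ndvd_s => s2k0; rewrite /dvdn -mod_k s2k0 mod0n.
have s2k_neqk : (s %% (2 * k) != k)%N.
  by apply: contraNneq k_ndvd_s => s2kk; rewrite /dvdn -mod_k s2kk modnn.
by rewrite /colours /allowed_part s_gt0 s2k_neq0 (negbTE s2k_neqk).
Qed.

Lemma colours_mull k i : (0 < k)%N -> colours k (i * k) = (2 * odd i)%N.
Proof.
move=> k_gt0; rewrite /colours /allowed_part -muln_modl modn2 muln_gt0 k_gt0 andbT.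
case: (boolP (odd i)) => [odd_i|_]; last by rewrite !andbF.
have i_gt0 : (0 < i)%N by case: i odd_i.
by rewrite i_gt0 mul1n -lt0n k_gt0 eqxx.
Qed.

Section Overpartitions.
Variables k n : nat.

Definition admissible (x y : 'I_n.+1 * bool) : bool :=
  ((y.1 == 0 :> nat) || allowed_part k x.1 x.2) && (y.2 ==> (0 < y.1)%N).

Lemma col_overpartitionE f : col_overpartition k n f =
  (f \in family admissible) && (\sum_(x : 'I_n.+1 * bool) (x.1 : nat) * (f x).1 == n)%N.
Proof.
rewrite /col_overpartition; congr (_ && _).
apply/andP/familyP => [[/forallP f1 /forallP f2] x|fP].
  by apply/andP; split; [apply: f1 | apply: f2].
by split; apply/forallP => x; have /andP[] := fP x.
Qed.

Lemma sum_admissible x :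
  \sum_(y | admissible x y) 'X^(x.1 * y.1) =
  if allowed_part k x.1 x.2 then over_trunc n x.1 else 1 :> {poly int}.
Proof.
case: x => s c /=; rewrite big_mkcond /=.
pose F (a : 'I_n.+1) (b : bool) : {poly int} :=
  if admissible (s, c) (a, b) then 'X^(s * a) else 0.
rewrite (eq_bigr (fun y => F y.1 y.2)) => [|[] //].
rewrite -(pair_bigA _ F) /=; under eq_bigr do rewrite big_bool /=.
rewrite /F /admissible big_ord_recl; under eq_bigr do rewrite lift0 /=.
rewrite /= muln0 andbT; case: allowed_part => /=; last by rewrite add0r big1 ?addr0.
rewrite /over_trunc /geom_trunc big_ord_recl muln0 mulr2n big_split /=.
have -> : \sum_(i < n) 'X^(s * lift ord0 i) = \sum_(i < n) 'X^(s * i.+1) :> {poly int}.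
  by apply: eq_bigr => i _; rewrite lift0.
ring.
Qed.

Lemma num_col_overpartitionsE :
  (num_col_overpartitions k n)%:Z =
  (\prod_(0 <= s < n.+1) over_trunc n s ^+ colours k s : {poly int})`_n.
Proof.
have -> : num_col_overpartitions k n = #|[set f in family admissible |
    (\sum_(x : 'I_n.+1 * bool) (x.1 : nat) * (f x).1 == n)%N]|.
  by apply: eq_card => f; rewrite !inE col_overpartitionE.
have -> : \prod_(0 <= s < n.+1) over_trunc n s ^+ colours k s =
    \prod_(x : 'I_n.+1 * bool) \sum_(y | admissible x y) 'X^(x.1 * y.1) :> {poly int}.
  rewrite big_mkord (eq_bigr (fun s : 'I_n.+1 =>
    \prod_(c : bool) if allowed_part k s c then over_trunc n s else 1)) => [|s _].
    rewrite (pair_bigA _ (fun (s : 'I_n.+1) c =>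
      if allowed_part k s c then over_trunc n s else 1)).
    by apply: eq_bigr => x _; rewrite sum_admissible.
  by rewrite big_bool /colours exprD mulrC; do 2 case: allowed_part.
by rewrite (coef_prod_sum_Xn _ (fun x y : 'I_n.+1 * bool => (x.1 * y.1)%N)) natz.
Qed.

End Overpartitions.

Lemma prod_nat_blocks {R : comNzRingType} (F : nat -> R) k m : (0 < k)%N ->
  \prod_(0 <= s < m * k) F s =
  (\prod_(0 <= i < m) F (i * k)%N) * \prod_(0 <= i < m) \prod_(1 <= r < k) F (i * k + r)%N.
Proof.
move=> k_gt0; rewrite big_nat_mul -big_split; apply: eq_bigr => i _ /=.
rewrite -{1}[(i * k)%N]add0n big_addn mulSn addnK big_ltn //=.
by congr (F _ * _); apply: eq_bigr => r _; rewrite addnC.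
Qed.

Section Substitution.
Context {R : comNzRingType}.
Variables k n : nat.
Hypothesis k_gt0 : (0 < k)%N.

Lemma theta_over_trunc_Xn :
  eqmodX (k * n.+1)
    ((\prod_(0 <= i < n.+1) over_trunc n (i * k) ^+ (0 < i)%N) * (theta_trunc n \Po 'X^k))
    (\prod_(0 <= i < n.+1) over_trunc n (i * k) ^+ (2 * odd i)%N : {poly R}).
Proof.
have comp_prod (c : nat -> nat) :
    (\prod_(0 <= i < n.+1) over_trunc n i ^+ c i) \Po 'X^k =
    \prod_(0 <= i < n.+1) over_trunc n (i * k) ^+ c i :> {poly R}.
  by rewrite rmorph_prod; apply: eq_bigr => i _; rewrite rmorphXn /= over_trunc_comp_Xn.
have := eqmodX_comp_Xn k_gt0 (@theta_over_trunc R n).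
by rewrite comp_polyM (comp_prod (fun i => 0 < i)%N) (comp_prod (fun i => 2 * odd i)%N).
Qed.

Lemma over_trunc_widen (c : nat -> nat) :
  eqmodX n.+1 (\prod_(0 <= s < n.+1) over_trunc n s ^+ c s)
    (\prod_(0 <= s < n.+1 * k) over_trunc n s ^+ c s : {poly R}).
Proof.
apply: eqmodX_prod_widen => [|s /andP[lt_ns _] _]; first by rewrite leq_pmulr.
by rewrite -[X in eqmodX _ _ X](expr1n _ (c s)); apply/eqmodXX/over_trunc_large.
Qed.

Lemma over_trunc_blocks (c : nat -> nat) : (forall s, ~~ (k %| s)%N -> c s = 1%N) ->
  \prod_(0 <= s < n.+1 * k) over_trunc n s ^+ c s =
  (\prod_(0 <= i < n.+1) over_trunc n (i * k) ^+ c (i * k)%N)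
  * \prod_(0 <= i < n.+1) \prod_(1 <= r < k) over_trunc n (i * k + r) :> {poly R}.
Proof.
move=> c1; rewrite prod_nat_blocks //; congr (_ * _); apply: eq_bigr => i _.
apply: eq_big_nat => r /andP[r_gt0 lt_rk]; rewrite c1 // dvdn_addr ?dvdn_mull //.
by rewrite gtnNdvd.
Qed.

Lemma theta_over_trunc_colours :
  eqmodX n.+1
    ((\prod_(0 <= s < n.+1) over_trunc n s ^+ (0 < s)%N) * (theta_trunc n \Po 'X^k))
    (\prod_(0 <= s < n.+1) over_trunc n s ^+ colours k s : {poly R}).
Proof.
set C := \prod_(0 <= i < n.+1) \prod_(1 <= r < k) over_trunc n (i * k + r) : {poly R}.
apply: (@eqmodX_trans _ _
  ((\prod_(0 <= s < n.+1 * k) over_trunc n s ^+ (0 < s)%N) * (theta_trunc n \Po 'X^k))).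
  by apply: eqmodXM => //; apply: over_trunc_widen.
apply: eqmodX_trans (eqmodX_sym (over_trunc_widen (colours k))).
rewrite !over_trunc_blocks => [||s]; last 2 first.
- exact: colours_ndvd.
- by case: s => [|s]; rewrite ?dvdn0.
rewrite -/C [X in eqmodX _ X _]mulrAC; apply: eqmodXM => //.
under eq_bigr do rewrite muln_gt0 k_gt0 andbT.
under [X in eqmodX _ _ X]eq_bigr do rewrite colours_mull //.
exact: eqmodX_leq (leq_pmull _ k_gt0) theta_over_trunc_Xn.
Qed.

End Substitution.

Lemma gen_truncE k n :
  eqmodX n.+1 (gen_trunc k n)
    ((\prod_(0 <= s < n.+1) over_trunc n s ^+ (0 < s)%N) * (theta_trunc n \Po 'X^k)).
Proof.
rewrite /gen_trunc prod_expr_pos; apply: eqmodXM.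
  apply: eqmodX_prod_nat => j /andP[j_gt0 _] _.
  rewrite (mul1DXn_geom_trunc n j) -[X in eqmodX _ _ X]addr0; apply: eqmodXD => //.
  by apply: eqmodX_Xn0; rewrite leq_pmull.
rewrite /theta_trunc rmorph_sum /=.
by under [X in eqmodX _ _ X]eq_bigr do rewrite comp_Xn_poly -exprM.
Qed.

Theorem theorem1 (k n : nat) : (0 < k)%N ->
  g k n = (num_col_overpartitions k n)%:Z.
Proof.
move=> k_gt0; rewrite num_col_overpartitionsE.
have /eqmodXP := eqmodX_trans (gen_truncE k n) (theta_over_trunc_colours n k_gt0).
by apply.
Qed.
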